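(* Let $n\ge1$ and let $\mathcal{I}$ be an interval hypergraph on $[n]$ containing all singletons. The map $\pi\mapsto \mathrm{Or}_\pi$ from the weak order on permutations of $[n]$ to $P_{\mathcal{I}}$ is a meet (resp. join) semilattice morphism if and only if $\mathcal{I}$ is closed under initial (resp. final) subintervals, i.e. $[i,k]\in\mathcal{I}$ implies $[i,j]\in\mathcal{I}$ (resp. $[j,k]\in\mathcal{I}$) for all $1\le i<j<k\le n$.
   Context: An interval hypergraph $\mathcal{I}$ on $[n]$ is a collection of intervals $[i,j]=\{i,\dots,j\}$ of $[n]$, by convention containing all singletons. An orientation is a map $O:\mathcal{I}\to[n]$ with $O(I)\in I$; it is acyclic if there are no $H_1,\dots,H_k\in\mathcal{I}$, $k\ge2$, with $O(H_{i+1})\in H_i\setminus\{O(H_i)\}$ for $i\in[k-1]$ and $O(H_1)\in H_k\setminus\{O(H_k)\}$. Orientations $O\ne O'$ are related by an increasing flip (from $O$ to $O'$) if there exist $1\le i<j\le n$ such that for all $H$: if $O(H)\ne O'(H)$ then $O(H)=i$, $O'(H)=j$; and if $\{i,j\}\subseteq H$ then $O(H)=i\iff O'(H)=j$. $P_{\mathcal{I}}$ is the transitive closure of the increasing flip relation on acyclic orientations. For a permutation $\pi$ of $[n]$ (in one-line notation), $\mathrm{Or}_\pi$ is the acyclic orientation with $\mathrm{Or}_\pi(I)=\pi(\min\{j:\pi(j)\in I\})$; this map is a surjective poset morphism from the weak order to $P_{\mathcal{I}}$. A map $\phi$ between meet semilattices is a meet semilattice morphism if $\phi(a\wedge b)=\phi(a)\wedge\phi(b)$;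 equivalently, each fiber of $\phi$ is order convex and has a unique minimal element, and the map sending $a$ to the minimal element of its fiber is order preserving. Join semilattice morphisms are defined dually. *)

From Stdlib Require Import Relations.
From mathcomp Require Import all_boot all_fingroup.
Set Implicit Arguments. Unset Strict Implicit. Unset Printing Implicit Defensive.

(* [n] is modelled by 'I_n = {0,..,n-1}.  An interval [i,j] is the pair (i,j)
   with i <= j; the hypergraph is a set of such pairs. *)
Definition interval_t (n : nat) := ('I_n * 'I_n)%type.

Definition inH n (H : interval_t n) (x : 'I_n) : bool := (H.1 <= x <= H.2)%N.

Definition interval_hypergraph n (I : {set interval_t n}) : Prop :=
  (forall H, H \in I -> (H.1 <= H.2)%N) /\ (forall i : 'I_n, (i, i) \in I).

(* orientations: values outside I are normalised to H.1 so that an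
   orientation is determined by its values on I *)
Definition orientation_t n := {ffun interval_t n -> 'I_n}.

Definition is_orientation n (I : {set interval_t n}) (O : orientation_t n) : Prop :=
  forall H, if H \in I then inH H (O H) else O H == H.1.

Definition orel n (O : orientation_t n) : rel (interval_t n) :=
  fun H H' => inH H (O H') && (O H' != O H).

Definition acyclic_or n (I : {set interval_t n}) (O : orientation_t n) : Prop :=
  is_orientation I O /\
  ~ (exists s : seq (interval_t n),
        (2 <= size s)%N /\ all (fun H => H \in I) s /\ path.cycle (orel O) s).

Definition incr_flip n (I : {set interval_t n}) (O O' : orientation_t n) : Prop :=
  O <> O' /\
  exists i j : 'I_n, (i < j)%N /\
    forall H, H \in I ->
      (O H <> O' H -> O H = i /\ O' H = j) /\
      (inH H i && inH H j -> (O H = i <-> O' H = j)).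

Definition flipA n (I : {set interval_t n}) (O O' : orientation_t n) : Prop :=
  acyclic_or I O /\ acyclic_or I O' /\ incr_flip I O O'.

Definition PI_le n (I : {set interval_t n}) : relation (orientation_t n) :=
  clos_refl_trans (orientation_t n) (@flipA n I).

Definition PI_glb n (I : {set interval_t n}) (x a b : orientation_t n) : Prop :=
  acyclic_or I x /\ PI_le I x a /\ PI_le I x b /\
  forall y, acyclic_or I y -> PI_le I y a -> PI_le I y b -> PI_le I y x.

Definition PI_lub n (I : {set interval_t n}) (x a b : orientation_t n) : Prop :=
  acyclic_or I x /\ PI_le I a x /\ PI_le I b x /\
  forall y, acyclic_or I y -> PI_le I a y -> PI_le I b y -> PI_le I x y.

(* weak order on permutations (one-line notation pi(0) ... pi(n-1)):
   inversion set = pairs of values (a,b), a<b, with b before a *)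
Definition inv_set n (p : {perm 'I_n}) : {set 'I_n * 'I_n} :=
  [set ab : 'I_n * 'I_n | (ab.1 < ab.2)%N && ((p^-1)%g ab.2 < (p^-1)%g ab.1)%N].

Definition weak_le n (p q : {perm 'I_n}) : bool := inv_set p \subset inv_set q.

Definition weak_glb n (c a b : {perm 'I_n}) : Prop :=
  weak_le c a /\ weak_le c b /\
  forall d, weak_le d a -> weak_le d b -> weak_le d c.

Definition weak_lub n (c a b : {perm 'I_n}) : Prop :=
  weak_le a c /\ weak_le b c /\
  forall d, weak_le a d -> weak_le b d -> weak_le c d.

Definition Or n (I : {set interval_t n}) (p : {perm 'I_n}) : orientation_t n :=
  [ffun H : interval_t n =>
     if H \in I then p [arg min_(j < (p^-1)%g H.1 | inH H (p j)) (j : nat)]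
     else H.1].

Definition Or_meet_morphism n (I : {set interval_t n}) : Prop :=
  forall a b c : {perm 'I_n}, weak_glb c a b -> PI_glb I (Or I c) (Or I a) (Or I b).

Definition Or_join_morphism n (I : {set interval_t n}) : Prop :=
  forall a b c : {perm 'I_n}, weak_lub c a b -> PI_lub I (Or I c) (Or I a) (Or I b).

Definition closed_initial n (I : {set interval_t n}) : Prop :=
  forall i j k : 'I_n, (i < j < k)%N -> (i, k) \in I -> (i, j) \in I.

Definition closed_final n (I : {set interval_t n}) : Prop :=
  forall i j k : 'I_n, (i < j < k)%N -> (i, k) \in I -> (j, k) \in I.

(* [Or] is monotone: an adjacent transposition of a permutation either fixes
   its orientation or performs an increasing flip.  For an acyclic orientation
   [O], say that [y] dominates [x] when [x < y] and [x] is reached from [y] by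
   steps that each descend inside an interval oriented towards the current
   vertex.  The permutation [fiber_perm false I O], which puts [u] before [v]
   iff [u < v] and [v] does not dominate [u], or [v < u] and [u] dominates [v],
   lies in the fibre of [O] and below every permutation of that fibre.  If [I]
   is closed under initial subintervals, a flip changes only intervals oriented
   towards its smaller vertex [i], and their truncations at [i] witness the
   same dominations, so [O |-> fiber_perm false I O] is monotone.  A common
   lower bound [O] of [Or a] and [Or b] then lifts below [a] and [b], hence
   below their meet, and [O] lies below its image.  Joins are the same
   argument for the reversed order of [n] ([lt_dir true]).

   Conversely, if [(i, k)] is in [I] but [(i, j)] is not, let [e] be the least
   vertex [>= j] with [(i, e)] in [I].  List the vertices outside [(i, e)]
   first and those of [(i, e)] afterwards, starting with [i], [j], [e] in the
   orders [j i e] and [e i j], whose meet is [i j e].  Swapping adjacent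
   entries, [Or (j i e) = Or (j e i) <= Or (e j i) = Or (e i j)], so
   [Or (j i e)] is a common lower bound; but it orients [(i, e)] towards [j],
   above the orientation [i] given by [Or (i j e)]. *)

From mathcomp Require Import all_boot all_fingroup zify.
From Stdlib Require Import Relation_Operators.
Set Implicit Arguments. Unset Strict Implicit. Unset Printing Implicit Defensive.

(** * Orientations induced by permutations *)

Definition pos n (p : {perm 'I_n}) (v : 'I_n) : nat := (p^-1)%g v.

Lemma pos_inj n (p : {perm 'I_n}) : injective (pos p).
Proof. by move=> u v /val_inj /perm_inj. Qed.

Lemma pos_perm n (p : {perm 'I_n}) j : pos p (p j) = j.
Proof. by rewrite /pos permK. Qed.

Lemma pos_ltNge n (p : {perm 'I_n}) u v : u != v ->
  (pos p u < pos p v)%N = ~~ (pos p v < pos p u)%N.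
Proof.
by move=> uv; rewrite -leqNgt ltn_neqAle (inj_eq (@pos_inj _ p)) uv.
Qed.

Lemma inv_setE n (p : {perm 'I_n}) ab :
  (ab \in inv_set p) = (ab.1 < ab.2)%N && (pos p ab.2 < pos p ab.1)%N.
Proof. by rewrite inE. Qed.

Lemma PI_le_leq n (I : {set interval_t n}) O O' : PI_le I O O' ->
  forall H, H \in I -> (O H <= O' H)%N.
Proof.
elim=> [A B [_ [_ [_ [i [j [ij flip]]]]]] H HI | // | A B C _ AB _ BC H HI].
- have [AB _] := flip H HI.
  have [->//|/eqP neq] := eqVneq (A H) (B H).
  by have [-> ->] := AB neq; apply: ltnW.
- exact: leq_trans (AB _ HI) (BC _ HI).
Qed.

Section Orientation.

Variables (n : nat) (I : {set interval_t n}).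
Hypothesis I_wf : forall H, H \in I -> (H.1 <= H.2)%N.

Lemma inH_Or p H : H \in I -> inH H (Or I p H).
Proof.
move=> HI; rewrite /Or ffunE HI.
by case: arg_minnP => [|j //]; rewrite permKV /inH leqnn I_wf.
Qed.

Lemma Or_pos_min p H v : H \in I -> inH H v -> (pos p (Or I p H) <= pos p v)%N.
Proof.
move=> HI Hv; rewrite /Or ffunE HI.
case: arg_minnP => [|j _ min]; first by rewrite permKV /inH leqnn I_wf.
by rewrite pos_perm min // /pos permKV.
Qed.

Lemma Or_notin p H : H \notin I -> Or I p H = H.1.
Proof. by move=> /negbTE HI; rewrite /Or ffunE HI. Qed.

Lemma Or_eq p H o : H \in I -> inH H o ->
  (forall v, inH H v -> (pos p o <= pos p v)%N) -> Or I p H = o.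
Proof.
move=> HI Ho min; apply: (@pos_inj _ p); apply/eqP.
by rewrite eqn_leq Or_pos_min // min // inH_Or.
Qed.

Lemma Or_pos_lt p H v : H \in I -> inH H v -> v != Or I p H ->
  (pos p (Or I p H) < pos p v)%N.
Proof.
move=> HI Hv vO; rewrite ltn_neqAle Or_pos_min // andbT.
by rewrite (inj_eq (@pos_inj _ p)) eq_sym.
Qed.

Lemma Or_eq_of_pos_lt p q :
  (forall u v, (pos p u < pos p v)%N -> (pos q u < pos q v)%N) -> Or I p = Or I q.
Proof.
move=> pq; apply/ffunP => H.
have [HI|HI] := boolP (H \in I); last by rewrite !Or_notin.
symmetry; apply: Or_eq => // [|v Hv]; first exact: inH_Or.
have [->//|vO] := eqVneq v (Or I p H).
exact/ltnW/pq/Or_pos_lt.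
Qed.

Lemma Or_acyclic p : acyclic_or I (Or I p).
Proof.
split=> [H|[[|H0 s] [_ [sI cyc]]] //].
  by case: ifP => HI; [exact: inH_Or | rewrite Or_notin ?HI].
pose ltO A B := (pos p (Or I p A) < pos p (Or I p B))%N.
have sub : {in (fun H => H \in I) &, subrel (orel (Or I p)) ltO}.
  by move=> A B AI _ /andP[AB neq]; apply: Or_pos_lt.
have sI' : all (fun H => H \in I) (H0 :: rcons s H0).
  by rewrite /= all_rcons; move: sI => /= /andP[-> ->].
have := order_path_min (fun _ _ _ => @ltn_trans _ _ _) (sub_in_path sub sI' cyc).
by rewrite all_rcons /ltO ltnn.
Qed.

End Orientation.

(** * Adjacent transpositions and monotonicity *)

Definition adjacent_swap n (p p' : {perm 'I_n}) (x y : 'I_n) :=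
  [/\ (pos p x < pos p y)%N,
      (forall v, ~~ (pos p x < pos p v < pos p y)%N),
      (pos p' y < pos p' x)%N &
      forall u v, (u, v) \notin [:: (x, y); (y, x)] ->
        (pos p' u < pos p' v)%N = (pos p u < pos p v)%N].

Section AdjacentSwap.

Variables (n : nat) (p p' : {perm 'I_n}) (x y : 'I_n).
Hypothesis swap : adjacent_swap p p' x y.

Lemma inv_set_adjacent_swap : (x < y)%N -> inv_set p' = (x, y) |: inv_set p.
Proof.
case: swap => _ _ yx pres xy; apply/setP => -[a b].
rewrite in_setU1 !inv_setE /= xpair_eqE.
have [ab|ba] /= := ltnP a b; last first.
  rewrite orbF; apply/esym/negbTE/negP => /andP[/eqP ax /eqP bY].
  by move: ba; rewrite ax bY leqNgt xy.
have [/andP[/eqP-> /eqP->] //|ne] := boolP ((a == x) && (b == y)).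
rewrite pres // !in_cons !xpair_eqE (andbC (b == y)) (negbTE ne) /= orbF.
by apply/andP => -[/eqP bx /eqP ay]; move: ab; rewrite bx ay ltnNge ltnW.
Qed.

Lemma adjacent_swap_ltl u v : u != x -> u != y ->
  (pos p' u < pos p' v)%N = (pos p u < pos p v)%N.
Proof.
case: swap => _ _ _ pres ux uy; apply: pres.
by rewrite !in_cons !xpair_eqE (negbTE ux) (negbTE uy).
Qed.

Lemma adjacent_swap_ltr u v : v != x -> v != y ->
  (pos p' u < pos p' v)%N = (pos p u < pos p v)%N.
Proof.
case: swap => _ _ _ pres vx vy; apply: pres.
by rewrite !in_cons !xpair_eqE (negbTE vx) (negbTE vy) !andbF.
Qed.

Variables (I : {set interval_t n}).
Hypothesis I_wf : forall H, H \in I -> (H.1 <= H.2)%N.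

Lemma Or_adjacent_swap_moved H : H \in I -> Or I p H = x -> inH H y ->
  Or I p' H = y.
Proof.
case: swap => xy between yx _ HI Ox Hy; apply: Or_eq => // v Hv.
have [->//|vy] := eqVneq v y; have [->|vx] := eqVneq v x; first exact: ltnW.
have xv : (pos p x < pos p v)%N by rewrite -Ox Or_pos_lt // Ox.
rewrite ltnW // adjacent_swap_ltr // ltn_neqAle (inj_eq (@pos_inj _ p)).
by rewrite eq_sym vy leqNgt; have := between v; rewrite xv.
Qed.

Lemma Or_adjacent_swap_fixed H : H \in I -> ~~ ((Or I p H == x) && inH H y) ->
  Or I p' H = Or I p H.
Proof.
move=> HI notmoved; apply: Or_eq => //; first exact: inH_Or.
move=> v Hv; have [->//|vO] := eqVneq v (Or I p H); apply: ltnW.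
have Ov := Or_pos_lt I_wf HI Hv vO.
have [vx|vx] := eqVneq v x; last have [vy|vy] := eqVneq v y; last first.
- by rewrite adjacent_swap_ltr.
- subst v; have Ox : Or I p H != x.
    by apply: contraNneq notmoved => ->; rewrite Hv eqxx.
  by rewrite adjacent_swap_ltl // eq_sym.
- case: swap => xy _ _ _; subst v.
  have Oy : Or I p H != y by apply: contraTneq Ov => ->; rewrite -leqNgt ltnW.
  by rewrite adjacent_swap_ltl // eq_sym.
Qed.

Lemma Or_adjacent_swap_eq :
  (forall H, H \in I -> Or I p H = x -> inH H y -> False) -> Or I p' = Or I p.
Proof.
move=> nomove; apply/ffunP => H.
have [HI|HI] := boolP (H \in I); last by rewrite !Or_notin.
apply: Or_adjacent_swap_fixed => //; apply/negP => /andP[/eqP Ox Hy].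
exact: nomove Ox Hy.
Qed.

Lemma PI_le_adjacent_swap : (x < y)%N -> PI_le I (Or I p) (Or I p').
Proof.
move=> xy; have [->|neq] := eqVneq (Or I p) (Or I p'); first exact: rt_refl.
apply: rt_step; split; first exact: Or_acyclic.
split; first exact: Or_acyclic.
split; first exact/eqP.
exists x, y; split=> // H HI.
have [/andP[/eqP Ox Hy]|notmoved] := boolP ((Or I p H == x) && inH H y).
  by rewrite Ox (Or_adjacent_swap_moved HI Ox Hy); split=> _; split.
rewrite (Or_adjacent_swap_fixed HI notmoved); split=> // /andP[Hx Hy].
split=> [Ox|Oy]; first by move: notmoved; rewrite Ox eqxx Hy.
case: swap => pxy _ _ _.
by have := Or_pos_min I_wf p HI Hx; rewrite Oy leqNgt pxy.
Qed.

End AdjacentSwap.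

Lemma exists_descent (f : nat -> nat) i d : (f (i + d) < f i)%N ->
  exists2 k, (i <= k < i + d)%N & (f k.+1 < f k)%N.
Proof.
elim: d => [|d IH]; first by rewrite addn0 ltnn.
rewrite addnS => lt; have [desc|asc] := ltnP (f (i + d).+1) (f (i + d)).
  by exists (i + d); rewrite // leq_addr /=.
have [k /andP[ik kd] desc] := IH (leq_ltn_trans asc lt).
by exists k; rewrite // ik ltnS ltnW.
Qed.

Lemma adjacent_inversion n (p q : {perm 'I_n}) ab :
  weak_le p q -> ab \in inv_set q :\: inv_set p ->
  exists x y : 'I_n, [/\ (x < y)%N, pos p y = (pos p x).+1 & (x, y) \in inv_set q].
Proof.
case: ab => a b /subsetP pq; rewrite inE !inv_setE /= => /andP[notp /andP[ab qba]].
have a_b : a != b by rewrite neq_ltn ab.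
rewrite ab /= -pos_ltNge // in notp.
pose at_ k := p (insubd a k).
have posE k : (k < n)%N -> pos p (at_ k) = k by move=> kn; rewrite /at_ pos_perm val_insubd kn.
have atE v : at_ (pos p v) = v by rewrite /at_ /pos valKd permKV.
have := @exists_descent (fun k => pos q (at_ k)) (pos p a) (pos p b - pos p a).
rewrite subnKC ?(ltnW notp) // !atE => /(_ qba) [k /andP[ak kb]].
have kn : (k.+1 < n)%N by exact: leq_ltn_trans kb (ltn_ord ((p^-1)%g b)).
set x := at_ k; set y := at_ k.+1 => qyx.
have pxy : pos p y = (pos p x).+1 by rewrite !posE // ltnW.
have [xy|yx|/val_inj xy] := ltngtP x y.
- by exists x, y; split; rewrite // inv_setE /= xy.
- have : (y, x) \in inv_set q by apply: pq; rewrite inv_setE /= yx pxy ltnSn.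
  by rewrite inv_setE /= (ltnNge (pos q x)) (ltnW qyx) andbF.
- by move: pxy; rewrite xy => /n_Sn.
Qed.

Lemma tperm_adjacent_ltn n (k k1 a b : 'I_n) : val k1 = (val k).+1 ->
  (a, b) \notin [:: (k, k1); (k1, k)] ->
  (tperm k k1 a < tperm k k1 b)%N = (a < b)%N.
Proof.
move=> kk1 ab.
have tpermE c : val (tperm k k1 c) =
    if val c == val k then val k1 else if val c == val k1 then val k else val c.
  case: tpermP => [->|->|/eqP ck /eqP ck1]; first by rewrite eqxx.
    by rewrite kk1 eqn_leq ltnn eqxx.
  by rewrite !val_eqE (negbTE ck) (negbTE ck1).
rewrite !tpermE; move: ab; rewrite !in_cons !xpair_eqE -!val_eqE.
by do 4 case: eqP; simpl in *; lia.
Qed.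

Lemma pos_tperm_mul n (p : {perm 'I_n}) k k1 v :
  pos (tperm k k1 * p)%g v = tperm k k1 ((p^-1)%g v).
Proof. by rewrite /pos invMg tpermV permM. Qed.

Lemma adjacent_swap_tperm n (p : {perm 'I_n}) x y : pos p y = (pos p x).+1 ->
  adjacent_swap p (tperm ((p^-1)%g x) ((p^-1)%g y) * p)%g x y.
Proof.
move=> pxy; split=> [|v||u v uv]; rewrite ?pos_tperm_mul ?tpermL ?tpermR.
- by rewrite pxy.
- by rewrite pxy; lia.
- by have := pxy; rewrite /pos => ->.
- rewrite tperm_adjacent_ltn //.
  by rewrite !in_cons !xpair_eqE !(inj_eq (@perm_inj _ (p^-1)%g)) -!xpair_eqE.
Qed.

Lemma inv_set_eq_pos_lt n (p q : {perm 'I_n}) u v : inv_set p = inv_set q ->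
  (pos p u < pos p v)%N = (pos q u < pos q v)%N.
Proof.
move=> pq; have [uv|vu|/val_inj->] := ltngtP u v; last by rewrite !ltnn.
- move/setP/(_ (u, v)): pq; rewrite !inv_setE /= uv /=.
  have u_v : u != v by rewrite neq_ltn uv.
  by rewrite !(pos_ltNge _ u_v) => ->.
- by move/setP/(_ (v, u)): pq; rewrite !inv_setE /= vu.
Qed.

Lemma Or_mono n (I : {set interval_t n}) (p q : {perm 'I_n}) :
  (forall H, H \in I -> (H.1 <= H.2)%N) -> weak_le p q -> PI_le I (Or I p) (Or I q).
Proof.
move=> I_wf; have [N] := ubnP #|inv_set q :\: inv_set p|.
elim: N p => // N IH p size pq.
have [/eqP|[ab ab_new]] := set_0Vmem (inv_set q :\: inv_set p).
  rewrite setD_eq0 => qp.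
  have /eqP pq_eq : inv_set p == inv_set q by rewrite eqEsubset qp andbT.
  rewrite (Or_eq_of_pos_lt I_wf (p := p) (q := q)) => [|u v]; first exact: rt_refl.
  by rewrite (inv_set_eq_pos_lt _ _ pq_eq).
have [x [y [xy pxy xyq]]] := adjacent_inversion pq ab_new.
have swap := adjacent_swap_tperm pxy.
have inv' := inv_set_adjacent_swap swap xy.
apply: rt_trans (PI_le_adjacent_swap swap I_wf xy) (IH _ _ _).
  rewrite ltnS in size; apply: (leq_trans _ size); apply: proper_card; apply/properP; split.
    by rewrite inv'; apply/setDS/subsetUr.
  exists (x, y); last by rewrite inv' !inE eqxx.
  by rewrite in_setD xyq andbT inv_setE /= pxy (ltnNge (pos p x).+1) leqnSn andbF.
by rewrite /weak_le inv' subUset sub1set xyq.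
Qed.

(** * Extremal permutations of a fibre *)

Definition strict_total (T : eqType) (R : rel T) :=
  [/\ irreflexive R, transitive R & forall u v, u != v -> R u v || R v u].

Section PermOfOrder.

Variables (n : nat) (R : rel 'I_n).
Hypothesis R_st : strict_total R.

Definition rank (v : 'I_n) : nat := #|[set u | R u v]|.

Lemma rank_lt v : (rank v < n)%N.
Proof.
case: R_st => irr _ _; rewrite -[n]card_ord -cardsT; apply: proper_card; apply/properP.
by split; [exact: subsetT | exists v; rewrite ?inE ?irr].
Qed.

Lemma rank_ltE u v : (rank u < rank v)%N = R u v.
Proof.
case: R_st => irr tr tot.
have mono a b : R a b -> (rank a < rank b)%N.
  move=> ab; apply: proper_card; apply/properP; split.
    by apply/subsetP => w; rewrite !inE => /tr; apply.
  by exists a; rewrite !inE ?irr.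
have [<-|uv] := eqVneq u v; first by rewrite ltnn irr.
have [vu|nvu] := boolP (R v u).
  have -> : R u v = false by apply/negP => /tr/(_ vu); rewrite irr.
  by rewrite ltnNge ltnW ?mono.
by move: (tot _ _ uv); rewrite (negbTE nvu) orbF => /[dup] /mono ->.
Qed.

Definition rank_ord v : 'I_n := Ordinal (rank_lt v).

Lemma rank_ord_inj : injective rank_ord.
Proof.
move=> u v /(congr1 val) /= eq_uv; apply/eqP; apply: contraT => uv.
by case: R_st => _ _ /(_ _ _ uv) /orP[]; rewrite -rank_ltE eq_uv ltnn.
Qed.

Definition perm_of_order : {perm 'I_n} := ((perm rank_ord_inj)^-1)%g.

Lemma pos_perm_of_order u v :
  (pos perm_of_order u < pos perm_of_order v)%N = R u v.
Proof. by rewrite /pos invgK !permE rank_ltE. Qed.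

End PermOfOrder.

Definition lt_dir (rv : bool) n (x y : 'I_n) : bool :=
  if rv then (y < x)%N else (x < y)%N.

Section DirectedOrder.

Variables (rv : bool) (n : nat).
Implicit Types (x y z : 'I_n).

Lemma lt_dir_irr x : lt_dir rv x x = false.
Proof. by rewrite /lt_dir ltnn; case: rv. Qed.

Lemma lt_dir_trans y x z : lt_dir rv x y -> lt_dir rv y z -> lt_dir rv x z.
Proof. by rewrite /lt_dir; case: rv; lia. Qed.

Lemma lt_dir_asym x y : lt_dir rv x y -> lt_dir rv y x = false.
Proof. by rewrite /lt_dir; case: rv; lia. Qed.

Lemma lt_dir_total x y : x != y -> lt_dir rv x y || lt_dir rv y x.
Proof. by rewrite /lt_dir -val_eqE; case: rv => /=; lia. Qed.

Lemma lt_dir_neq x y : lt_dir rv x y -> x != y.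
Proof. by apply: contraTneq => ->; rewrite lt_dir_irr. Qed.

Lemma inH_between (H : interval_t n) x y z :
  inH H x -> inH H z -> lt_dir rv x y -> lt_dir rv y z -> inH H y.
Proof. by rewrite /inH /lt_dir; case: rv; lia. Qed.

End DirectedOrder.

Section Dominance.

Variables (rv : bool) (n : nat) (I : {set interval_t n}) (O : orientation_t n).

Definition dom_step : rel 'I_n := fun y x =>
  lt_dir rv x y && [exists H, [&& H \in I, O H == y, inH H x & inH H y]].

Definition dominates y x := lt_dir rv x y && connect dom_step y x.

Definition fiber_order : rel 'I_n := fun u v =>
  if lt_dir rv u v then ~~ dominates v u else dominates u v.

Lemma dom_path_last z s : path dom_step z s -> last z s = z \/ lt_dir rv (last z s) z.
Proof.
elim: s z => [|w s IH] z /=; first by left.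
case/andP=> /andP[wz _] /IH[->|lt]; right=> //.
exact: lt_dir_trans lt wz.
Qed.

Lemma dominates_irr x : dominates x x = false.
Proof. by rewrite /dominates lt_dir_irr. Qed.

Lemma dominates_trans y x z : dominates z y -> dominates y x -> dominates z x.
Proof.
case/andP=> yz zy /andP[xy yx].
by rewrite /dominates (lt_dir_trans xy yz) (connect_trans zy yx).
Qed.

Lemma dominates_between x y z :
  dominates z x -> lt_dir rv x y -> lt_dir rv y z -> dominates z y.
Proof.
case/andP=> _ /connectP[s zs ->] {x}; elim: s z zs => [|w s IH] z /=.
  by move=> _ /lt_dir_asym ->.
case/andP=> zw ws xy yz; rewrite /dominates yz /=.
have [->|yw] := eqVneq y w; first exact: connect1.
case/orP: (lt_dir_total rv yw) => [yw'|wy].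
  by case/andP: (IH w ws xy yw') => _; apply: connect_trans (connect1 zw).
apply: connect1; rewrite /dom_step yz /=.
case/andP: zw => _ /existsP[H /and4P[HI OH Hw Hz]].
by apply/existsP; exists H; rewrite HI OH Hz (inH_between Hw Hz wy yz).
Qed.

Lemma dominates_last_step y x : dominates y x ->
  exists2 w, dom_step w x & ~~ lt_dir rv y w.
Proof.
case/andP=> xy /connectP[s ys xE]; rewrite {x}xE in xy *.
elim: s y ys xy => [|w s IH] y /=; first by rewrite lt_dir_irr.
case/andP=> yw ws _; have [->|lt] := dom_path_last ws.
  by exists y; rewrite ?lt_dir_irr.
have [w' w's notw'] := IH w ws lt; exists w' => //.
apply: contra notw' => yw'; case/andP: yw => wy _.
exact: lt_dir_trans wy yw'.
Qed.

Lemma fiber_order_strict_total : strict_total fiber_order.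
Proof.
have asym u v : fiber_order u v -> fiber_order v u -> False.
  rewrite /fiber_order; have [uv|vu] := boolP (lt_dir rv u v).
    by rewrite (lt_dir_asym uv) => /negP.
  case: ifP => _ d; first by move/negP.
  by case/andP=> uv; rewrite uv in vu.
split.
- by move=> u; rewrite /fiber_order lt_dir_irr dominates_irr.
- move=> v u w.
  have [<-|uv] := eqVneq u v; first by rewrite /fiber_order lt_dir_irr dominates_irr.
  have [<-|vw] := eqVneq v w; first by rewrite /fiber_order lt_dir_irr dominates_irr.
  have [<-|uw] := eqVneq u w; first by move=> h1 h2; case: (asym _ _ h1 h2).
  rewrite /fiber_order.
  case/orP: (lt_dir_total rv uv) => huv; case/orP: (lt_dir_total rv vw) => hvw;
    case/orP: (lt_dir_total rv uw) => huw;
    rewrite ?huv ?hvw ?huw ?(lt_dir_asym huv) ?(lt_dir_asym hvw) ?(lt_dir_asym huw).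
  + by move=> nvu nwv; apply: contra nwv => /dominates_between; apply.
  + by move: (lt_dir_trans (lt_dir_trans huv hvw) huw); rewrite lt_dir_irr.
  + by move=> nvu dvw; apply: contra nvu; apply: dominates_trans.
  + by move=> /negP nvu dvw; case: nvu; apply: dominates_between dvw huw huv.
  + by move=> duv nwv; apply: contra nwv => /dominates_trans; apply.
  + by move=> duv _; apply: dominates_between duv hvw huw.
  + by move: (lt_dir_trans (lt_dir_trans huw hvw) huv); rewrite lt_dir_irr.
  + exact: dominates_trans.
- move=> u v uv; rewrite /fiber_order.
  by case/orP: (lt_dir_total rv uv) => h; rewrite h (lt_dir_asym h); case: dominates.
Qed.

End Dominance.

Definition fiber_perm rv n (I : {set interval_t n}) (O : orientation_t n) :=
  perm_of_order (fiber_order_strict_total rv I O).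

Lemma inv_set_fiber_perm rv n (I : {set interval_t n}) O ab :
  (ab \in inv_set (fiber_perm rv I O)) = (ab.1 < ab.2)%N && fiber_order rv I O ab.2 ab.1.
Proof. by rewrite inv_setE pos_perm_of_order. Qed.

Lemma acyclic_no_2cycle n (I : {set interval_t n}) O H H' : acyclic_or I O ->
  H \in I -> H' \in I -> inH H (O H') -> O H' != O H -> inH H' (O H) -> False.
Proof.
case=> _ acyc HI H'I HOH' neq H'OH; apply: acyc; exists [:: H; H'].
by rewrite /= HI H'I /orel HOH' neq H'OH eq_sym neq.
Qed.

Section FiberPerm.

Variables (rv : bool) (n : nat) (I : {set interval_t n}).
Hypothesis I_wf : forall H, H \in I -> (H.1 <= H.2)%N.

Lemma Or_fiber_perm O : acyclic_or I O -> Or I (fiber_perm rv I O) = O.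
Proof.
move=> acyc; have [orient _] := acyc; apply/ffunP => H.
have [HI|HI] := boolP (H \in I); last first.
  by rewrite Or_notin //; have := orient H; rewrite (negbTE HI) => /eqP.
have HO : inH H (O H) by have := orient H; rewrite HI.
apply: Or_eq => // v Hv; have [->//|vO] := eqVneq v (O H).
rewrite ltnW // pos_perm_of_order /fiber_order.
have [Ov|vO'] := boolP (lt_dir rv (O H) v); last first.
  have vO'' : lt_dir rv v (O H) by case/orP: (lt_dir_total rv vO) => //; rewrite (negbTE vO').
  rewrite /dominates vO'' connect1 // /dom_step vO''.
  by apply/existsP; exists H; rewrite HI eqxx Hv HO.
apply/negP => /dominates_last_step[w /andP[Ow /existsP[H' /and4P[H'I /eqP OH'w H'O H'w]]]].
move=> notvw; have Hw : inH H w.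
  have [->//|wv] := eqVneq w v.
  have wv' : lt_dir rv w v by case/orP: (lt_dir_total rv wv) => //; rewrite (negbTE notvw).
  exact: inH_between HO Hv Ow wv'.
apply: (acyclic_no_2cycle acyc HI H'I); rewrite ?OH'w //.
by rewrite eq_sym (lt_dir_neq Ow).
Qed.

Lemma dominates_Or_pos p y x : dominates rv I (Or I p) y x -> (pos p y < pos p x)%N.
Proof.
case/andP=> xy /connectP[s ys xE]; rewrite {x}xE in xy *.
elim: s y ys xy => [|w s IH] y /=; first by rewrite lt_dir_irr.
case/andP=> /andP[wy /existsP[H /and4P[HI /eqP OH Hw Hy]]] ws _.
have yw : (pos p y < pos p w)%N by rewrite -OH Or_pos_lt // OH (lt_dir_neq wy).
have [->//|lt] := dom_path_last ws; exact: ltn_trans yw (IH _ ws lt).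
Qed.

End FiberPerm.

Definition truncation_closed rv n (I : {set interval_t n}) :=
  forall H, H \in I -> forall i, inH H i ->
  exists2 H0, H0 \in I & forall x, inH H0 x = inH H x && ~~ lt_dir rv i x.

Lemma dominates_flip rv n (I : {set interval_t n}) (A B : orientation_t n) i j :
  truncation_closed rv I -> acyclic_or I A -> is_orientation I B ->
  (forall H, H \in I -> A H <> B H -> A H = i /\ B H = j) -> lt_dir rv i j ->
  forall y x, dominates rv I A y x -> dominates rv I B y x.
Proof.
move=> trunc acycA orientB flip ij y x /andP[xy yx]; rewrite /dominates xy /=.
apply: connect_sub yx => z w /andP[wz /existsP[H /and4P[HI /eqP AH Hw Hz]]].
apply: connect1; rewrite /dom_step wz /=.
have [AB|/eqP AB] := eqVneq (A H) (B H).
  by apply/existsP; exists H; rewrite HI -AB AH eqxx Hw Hz.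
have [Ai Bj] := flip H HI AB; subst z; rewrite Ai in Hz wz *.
have [H0 H0I H0E] := trunc H HI i Hz.
have [orientA _] := acycA.
have AH0 : A H0 = i.
  have [//|AH0i] := eqVneq (A H0) i; exfalso.
  have H0A : inH H0 (A H0) by have := orientA H0; rewrite H0I.
  apply: (acyclic_no_2cycle acycA HI H0I); rewrite ?Ai //.
    by move: H0A; rewrite H0E => /andP[].
  by rewrite H0E Hz lt_dir_irr.
have BH0 : B H0 = i.
  have [<-//|/eqP AB0] := eqVneq (A H0) (B H0).
  have [_ Bj0] := flip H0 H0I AB0.
  by have := orientB H0; rewrite H0I H0E Bj0 ij andbF.
apply/existsP; exists H0; rewrite H0I BH0 eqxx !H0E Hw Hz lt_dir_irr /=.
by rewrite lt_dir_asym.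
Qed.

Lemma weak_le_fiber_perm rv n (I : {set interval_t n}) O O' :
  truncation_closed rv I -> PI_le I O O' ->
  weak_le (fiber_perm rv I O) (fiber_perm rv I O').
Proof.
move=> trunc; elim=> [A B [acycA [acycB [_ [i [j [ij flip]]]]]]| A | A B C _ AB _ BC].
- apply/subsetP => -[a b]; rewrite !inv_set_fiber_perm /= /fiber_order.
  case/andP=> ab; rewrite ab; case: rv trunc => trunc /=; rewrite ?ab ?ltnNge ?(ltnW ab) /=.
  + apply: contra; apply: (dominates_flip (i := j) (j := i) trunc acycB acycA.1) => //.
    by move=> H HI BA; have [-> ->] := (flip H HI).1 (nesym BA).
  + apply: (dominates_flip (i := i) (j := j) trunc acycA acycB.1) => // H HI.
    by case/(_ H HI): flip.
- exact: subxx.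
- exact: subset_trans AB BC.
Qed.

Section ForwardDirection.

Variables (n : nat) (I : {set interval_t n}).
Hypothesis I_wf : forall H, H \in I -> (H.1 <= H.2)%N.

Lemma fiber_perm_Or_min p : weak_le (fiber_perm false I (Or I p)) p.
Proof.
apply/subsetP => -[a b]; rewrite inv_set_fiber_perm inv_setE /fiber_order /lt_dir /=.
by case/andP=> ab; rewrite ltnNge (ltnW ab) ab => /(dominates_Or_pos I_wf).
Qed.

Lemma fiber_perm_Or_max p : weak_le p (fiber_perm true I (Or I p)).
Proof.
apply/subsetP => -[a b]; rewrite inv_set_fiber_perm inv_setE /fiber_order /lt_dir /=.
case/andP=> ab ba; rewrite ab /=; apply/negP => /(dominates_Or_pos I_wf).
by rewrite ltnNge (ltnW ba).
Qed.

Lemma Or_meet_morphism_of_truncation_closed :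
  truncation_closed false I -> Or_meet_morphism I.
Proof.
move=> trunc a b c [ca [cb glb]].
split; first exact: Or_acyclic.
split; first exact: Or_mono.
split; first exact: Or_mono.
move=> O acyc Oa Ob; rewrite -(Or_fiber_perm false I_wf acyc); apply: Or_mono => //.
apply: glb.
  exact: subset_trans (weak_le_fiber_perm trunc Oa) (fiber_perm_Or_min a).
exact: subset_trans (weak_le_fiber_perm trunc Ob) (fiber_perm_Or_min b).
Qed.

Lemma Or_join_morphism_of_truncation_closed :
  truncation_closed true I -> Or_join_morphism I.
Proof.
move=> trunc a b c [ac [bc lub]].
split; first exact: Or_acyclic.
split; first exact: Or_mono.
split; first exact: Or_mono.
move=> O acyc aO bO; rewrite -(Or_fiber_perm true I_wf acyc); apply: Or_mono => //.
apply: lub.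
  exact: subset_trans (fiber_perm_Or_max a) (weak_le_fiber_perm trunc aO).
exact: subset_trans (fiber_perm_Or_max b) (weak_le_fiber_perm trunc bO).
Qed.

End ForwardDirection.

Lemma truncation_closed_initial n (I : {set interval_t n}) :
  interval_hypergraph I -> closed_initial I -> truncation_closed false I.
Proof.
case=> _ sing closed [a b] HI i /andP /= [ai ib].
exists (a, i); last by move=> x; rewrite /inH /lt_dir /=; lia.
have [ai'|] := ltnP a i; last by move=> ia; rewrite (@val_inj _ _ _ i a) ?sing //=; lia.
have [ib'|] := ltnP i b; first by apply: (closed _ _ b); rewrite ?ai' ?ib'.
by move=> bi; rewrite (@val_inj _ _ _ i b) //=; lia.
Qed.

Lemma truncation_closed_final n (I : {set interval_t n}) :
  interval_hypergraph I -> closed_final I -> truncation_closed true I.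
Proof.
case=> _ sing closed [a b] HI i /andP /= [ai ib].
exists (i, b); last by move=> x; rewrite /inH /lt_dir /=; lia.
have [ib'|] := ltnP i b; last by move=> bi; rewrite (@val_inj _ _ _ i b) ?sing //=; lia.
have [ai'|] := ltnP a i; first by apply: (closed a); rewrite ?ai' ?ib'.
by move=> ia; rewrite (@val_inj _ _ _ i a) //=; lia.
Qed.

(** * The counterexample *)

Section PermOfKey.

Variables (n : nat) (k : 'I_n -> nat).

(* Ties are broken by the vertex, so that [key_order] is total for every key. *)
Definition key_order : rel 'I_n := fun u v => (k u < k v)%N || (k u == k v) && (u < v)%N.

Lemma key_order_strict_total : strict_total key_order.
Proof.
split=> [u|v u w|u v]; rewrite /key_order.
- by rewrite !ltnn andbF.
- by case/orP=> [|/andP[/eqP->]] /[swap] /orP[|/andP[/eqP<-]]; lia.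
- by rewrite -val_eqE /=; lia.
Qed.

End PermOfKey.

Definition perm_of_key n (k : 'I_n -> nat) := perm_of_order (key_order_strict_total k).

Section PermOfKeyTheory.

Variables (n : nat) (k : 'I_n -> nat).
Hypothesis k_inj : injective k.

Lemma pos_perm_of_key u v :
  (pos (perm_of_key k) u < pos (perm_of_key k) v)%N = (k u < k v)%N.
Proof.
rewrite pos_perm_of_order /key_order; case: eqP => [/k_inj->|_]; last by rewrite orbF.
by rewrite !ltnn.
Qed.

Lemma inv_set_perm_of_key ab :
  (ab \in inv_set (perm_of_key k)) = (ab.1 < ab.2)%N && (k ab.2 < k ab.1)%N.
Proof. by rewrite inv_setE pos_perm_of_key. Qed.

Variables (I : {set interval_t n}).
Hypothesis I_wf : forall H, H \in I -> (H.1 <= H.2)%N.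

Lemma Or_perm_of_key_eq H o : H \in I -> inH H o ->
  (forall v, inH H v -> (k o <= k v)%N) -> Or I (perm_of_key k) H = o.
Proof.
move=> HI Ho min; apply: Or_eq => // v Hv.
have [->//|vo] := eqVneq v o; rewrite ltnW // pos_perm_of_key ltn_neqAle min //.
by rewrite (inj_eq k_inj) eq_sym vo.
Qed.

Lemma Or_perm_of_key_min H v : H \in I -> inH H v ->
  (k (Or I (perm_of_key k) H) <= k v)%N.
Proof.
move=> HI Hv; have := Or_pos_min I_wf (perm_of_key k) HI Hv.
by rewrite leqNgt pos_perm_of_key -leqNgt.
Qed.

End PermOfKeyTheory.

Lemma adjacent_swap_perm_of_key n (k k' : 'I_n -> nat) x y :
  injective k -> injective k' ->
  k y = (k x).+1 -> k' x = k y -> k' y = k x ->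
  (forall v, v != x -> v != y -> k' v = k v) ->
  adjacent_swap (perm_of_key k) (perm_of_key k') x y.
Proof.
move=> k_inj k'_inj kxy k'x k'y others.
have kx v : v != x -> k v != k x by apply: contra => /eqP/k_inj->.
have ky v : v != y -> k v != k y by apply: contra => /eqP/k_inj->.
split=> [|v||u v]; rewrite ?(pos_perm_of_key k_inj) ?(pos_perm_of_key k'_inj).
- by rewrite kxy.
- by rewrite kxy; lia.
- by rewrite k'x k'y kxy.
- rewrite !in_cons !xpair_eqE orbF => uv.
  have w_cases w : [\/ [/\ w = x, k' w = (k x).+1 & k w = k x],
                   [/\ w = y, k' w = k x & k w = (k x).+1]
                 | [/\ k' w = k w, k w != k x & k w != (k x).+1]].
    have [->|wx] := eqVneq w x; first by constructor 1; rewrite k'x kxy.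
    have [->|wy] := eqVneq w y; first by constructor 2; rewrite k'y kxy.
    by constructor 3; rewrite ?others // -?kxy ?kx ?ky.
  case: (w_cases u) => -[eu k'u ku]; case: (w_cases v) => -[ev k'v kv];
    rewrite ?eu ?ev ?eqxx /= in uv *; lia.
Qed.

Section Counterexample.

Variables (rv : bool) (n : nat) (s j e : 'I_n).
Hypotheses (sj : lt_dir rv s j) (je : lt_dir rv j e).

Let js : j != s. Proof. by rewrite eq_sym (lt_dir_neq sj). Qed.
Let ej : e != j. Proof. by rewrite eq_sym (lt_dir_neq je). Qed.
Let es : e != s. Proof. by rewrite eq_sym (lt_dir_neq (lt_dir_trans sj je)). Qed.

Local Notation sje := [:: s; j; e].

Definition outside v := lt_dir rv v s || lt_dir rv e v.

(* The permutation [key_perm t] lists the vertices outside the interval from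
   [s] to [e] first, then [s], [j], [e] in the relative order given by the
   permutation [t] of [0; 1; 2], then the other vertices of the interval. *)
Definition key (t : seq nat) (v : 'I_n) : nat :=
  if v \in sje then n + nth 0 t (index v sje)
  else if outside v then nat_of_ord v else n + 3 + v.

Definition key_perm t := perm_of_key (key t).

Section Rank.

Variable t : seq nat.
Hypothesis t_perm : perm_eq t (iota 0 3).

Lemma rank_lt3 v : v \in sje -> (nth 0 t (index v sje) < 3)%N.
Proof.
move=> Tv; suff : nth 0 t (index v sje) \in iota 0 3 by rewrite mem_iota.
rewrite -(perm_mem t_perm) mem_nth //.
by rewrite (perm_size t_perm) size_iota -[3]/(size sje) index_mem.
Qed.

Lemma key_inj : injective (key t).
Proof.
move=> u v; rewrite /key; case: (boolP (u \in _)) => Tu; case: (boolP (v \in _)) => Tv.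
- move/addnI/eqP; rewrite nth_uniq ?(perm_uniq t_perm) ?iota_uniq //;
    rewrite ?(perm_size t_perm) ?size_iota -?[3]/(size sje) ?index_mem //.
  by move/eqP/index_inj; apply.
- by move: (rank_lt3 Tu) (ltn_ord v) => {Tu Tv}; case: ifP; lia.
- by move: (rank_lt3 Tv) (ltn_ord u) => {Tu Tv}; case: ifP; lia.
- do 2 case: ifP => _; first exact: ord_inj.
  + by move=> uE; have := ltn_ord u; rewrite uE -addnA ltnNge leq_addr.
  + by move=> vE; have := ltn_ord v; rewrite -vE -addnA ltnNge leq_addr.
  + by move/addnI/ord_inj.
Qed.

Lemma inv_set_key_perm ab :
  (ab \in inv_set (key_perm t)) = (ab.1 < ab.2)%N && (key t ab.2 < key t ab.1)%N.
Proof. exact/inv_set_perm_of_key/key_inj. Qed.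

End Rank.

Lemma key_ltn_indep t t' u v : perm_eq t (iota 0 3) -> perm_eq t' (iota 0 3) ->
  ~~ ((u \in sje) && (v \in sje)) ->
  (key t u < key t v)%N = (key t' u < key t' v)%N.
Proof.
move=> t_perm t'_perm; rewrite /key.
case: (boolP (u \in _)) => Tu; case: (boolP (v \in _)) => Tv // _.
- by move: (rank_lt3 t_perm Tu) (rank_lt3 t'_perm Tu) (ltn_ord v) => {Tu Tv}; case: ifP; lia.
- by move: (rank_lt3 t_perm Tv) (rank_lt3 t'_perm Tv) (ltn_ord u) => {Tu Tv}; case: ifP; lia.
Qed.

Lemma key_s t : key t s = n + nth 0 t 0.
Proof. by rewrite /key mem_head /= eqxx. Qed.

Lemma key_j t : key t j = n + nth 0 t 1.
Proof. by rewrite /key !inE eqxx orbT /= eq_sym (negbTE js) eqxx. Qed.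

Lemma key_e t : key t e = n + nth 0 t 2.
Proof.
by rewrite /key !inE eqxx !orbT /= eq_sym (negbTE es) eq_sym (negbTE ej) eqxx.
Qed.

Lemma key_other t t' v : v != s -> v != j -> v != e -> key t v = key t' v.
Proof. by move=> vs vj ve; rewrite /key !inE (negbTE vs) (negbTE vj) (negbTE ve). Qed.

Lemma sje_not_outside v : v \in sje -> ~~ outside v.
Proof.
have se := lt_dir_trans sj je.
by rewrite !inE /outside => /or3P[]/eqP->;
  rewrite ?lt_dir_irr ?(lt_dir_asym sj) ?(lt_dir_asym je) ?(lt_dir_asym se).
Qed.

Lemma key_outside t v : outside v -> key t v = v.
Proof.
move=> out; have /negbTE notT : v \notin sje by apply: contraL out; apply: sje_not_outside.
by rewrite /key notT out.
Qed.

Lemma key_not_outside t v : ~~ outside v -> (n <= key t v)%N.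
Proof. by move=> /negbTE in_; rewrite /key in_; case: ifP => _; lia. Qed.

Lemma adjacent_swap_s_e : adjacent_swap (key_perm [:: 1; 0; 2]) (key_perm [:: 2; 0; 1]) s e.
Proof.
apply: adjacent_swap_perm_of_key; rewrite ?key_s ?key_e ?addnS //; try exact: key_inj.
move=> v vs ve; have [->|vj] := eqVneq v j; first by rewrite !key_j.
exact: key_other.
Qed.

Lemma adjacent_swap_j_s : adjacent_swap (key_perm [:: 2; 1; 0]) (key_perm [:: 1; 2; 0]) j s.
Proof.
apply: adjacent_swap_perm_of_key; rewrite ?key_s ?key_j ?addnS //; try exact: key_inj.
move=> v vj vs; have [->|ve] := eqVneq v e; first by rewrite !key_e.
exact: key_other.
Qed.

Lemma adjacent_swap_j_e : adjacent_swap (key_perm [:: 2; 0; 1]) (key_perm [:: 2; 1; 0]) j e.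
Proof.
apply: adjacent_swap_perm_of_key; rewrite ?key_j ?key_e ?addnS //; try exact: key_inj.
move=> v vj ve; have [->|vs] := eqVneq v s; first by rewrite !key_s.
exact: key_other.
Qed.

Lemma adjacent_swap_e_j : adjacent_swap (key_perm [:: 2; 1; 0]) (key_perm [:: 2; 0; 1]) e j.
Proof.
apply: adjacent_swap_perm_of_key; rewrite ?key_j ?key_e ?addnS //; try exact: key_inj.
move=> v ve vj; have [->|vs] := eqVneq v s; first by rewrite !key_s.
exact: key_other.
Qed.

Variables (I : {set interval_t n}) (H0 : interval_t n).
Hypothesis I_wf : forall H, H \in I -> (H.1 <= H.2)%N.
Hypotheses (H0I : H0 \in I) (H0E : forall v, inH H0 v = ~~ outside v).
Hypothesis s_j_without_e : forall H, H \in I -> inH H s -> inH H j -> ~~ inH H e ->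
  exists2 v, inH H v & outside v.

Lemma Or_key_perm_H0 t x : perm_eq t (iota 0 3) -> x \in sje -> nth 0 t (index x sje) = 0 ->
  Or I (key_perm t) H0 = x.
Proof.
move=> t_perm Tx tx; apply: Or_perm_of_key_eq => //.
- exact: key_inj.
- by rewrite H0E sje_not_outside.
have -> : key t x = n by rewrite /key Tx tx addn0.
by move=> v; rewrite H0E => /(key_not_outside t).
Qed.

Lemma Or_key_perm_012_H0 : Or I (key_perm [:: 0; 1; 2]) H0 = s.
Proof. by apply: Or_key_perm_H0; rewrite //= ?mem_head ?eqxx. Qed.

Lemma Or_key_perm_102_H0 : Or I (key_perm [:: 1; 0; 2]) H0 = j.
Proof. by apply: Or_key_perm_H0; rewrite //= ?inE ?eqxx ?orbT // eq_sym (negbTE js). Qed.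

Lemma Or_key_perm_102_201 : Or I (key_perm [:: 2; 0; 1]) = Or I (key_perm [:: 1; 0; 2]).
Proof.
apply: (Or_adjacent_swap_eq adjacent_swap_s_e I_wf) => H HI Os He.
have Hj : inH H j by apply: inH_between sj je; rewrite // -Os inH_Or.
have := Or_perm_of_key_min (@key_inj [:: 1; 0; 2] isT) I_wf HI Hj.
by rewrite Os key_s key_j addn0 addn1 ltnn.
Qed.

Lemma Or_key_perm_210_120 : Or I (key_perm [:: 1; 2; 0]) = Or I (key_perm [:: 2; 1; 0]).
Proof.
apply: (Or_adjacent_swap_eq adjacent_swap_j_s I_wf) => H HI Oj Hs.
have min := Or_perm_of_key_min (@key_inj [:: 2; 1; 0] isT) I_wf HI.
have Hj : inH H j by rewrite -Oj inH_Or.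
have [He|notHe] := boolP (inH H e).
  by have := min _ He; rewrite Oj key_j key_e addn0 addn1 ltnn.
have [v Hv out] := s_j_without_e HI Hs Hj notHe.
have := min _ Hv; rewrite Oj key_j key_outside //= => /(leq_trans (leq_addr _ _)).
by rewrite leqNgt ltn_ord.
Qed.

End Counterexample.

Lemma inv_set_key_perm_meet n (s j e : 'I_n) : lt_dir false s j -> lt_dir false j e ->
  inv_set (key_perm false s j e [:: 0; 1; 2]) =
  inv_set (key_perm false s j e [:: 1; 0; 2]) :&: inv_set (key_perm false s j e [:: 1; 2; 0]).
Proof.
move=> sj je; apply/setP => -[u v]; rewrite in_setI !(inv_set_key_perm sj je) //=.
have [uv|] //= := ltnP u v.
have [/andP[Tv Tu]|notT] := boolP ((v \in [:: s; j; e]) && (u \in [:: s; j; e])).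
  have sj' : (s < j)%N := sj; have je' : (j < e)%N := je.
  move: Tu Tv uv; rewrite !inE => /or3P[]/eqP-> /or3P[]/eqP-> uv;
    rewrite ?key_s ?(key_j _ sj) ?(key_e sj je) ?ltn_add2l //=; exfalso; lia.
rewrite (key_ltn_indep sj je (t := [:: 1; 0; 2]) (t' := [:: 0; 1; 2])) //.
by rewrite (key_ltn_indep sj je (t := [:: 1; 2; 0]) (t' := [:: 0; 1; 2])) // andbb.
Qed.

Lemma inv_set_key_perm_join n (s j e : 'I_n) : lt_dir true s j -> lt_dir true j e ->
  inv_set (key_perm true s j e [:: 0; 1; 2]) =
  inv_set (key_perm true s j e [:: 1; 0; 2]) :|: inv_set (key_perm true s j e [:: 1; 2; 0]).
Proof.
move=> sj je; apply/setP => -[u v]; rewrite in_setU !(inv_set_key_perm sj je) //=.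
have [uv|] //= := ltnP u v.
have [/andP[Tv Tu]|notT] := boolP ((v \in [:: s; j; e]) && (u \in [:: s; j; e])).
  have js' : (j < s)%N := sj; have ej' : (e < j)%N := je.
  move: Tu Tv uv; rewrite !inE => /or3P[]/eqP-> /or3P[]/eqP-> uv;
    rewrite ?key_s ?(key_j _ sj) ?(key_e sj je) ?ltn_add2l //=; exfalso; lia.
rewrite (key_ltn_indep sj je (t := [:: 1; 0; 2]) (t' := [:: 0; 1; 2])) //.
by rewrite (key_ltn_indep sj je (t := [:: 1; 2; 0]) (t' := [:: 0; 1; 2])) // orbb.
Qed.

Lemma weak_glb_of_inv_setI n (a b c : {perm 'I_n}) :
  inv_set c = inv_set a :&: inv_set b -> weak_glb c a b.
Proof.
move=> cE; rewrite /weak_glb /weak_le cE subsetIl subsetIr.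
by do 2!split=> //; move=> d da db; rewrite subsetI da db.
Qed.

Lemma weak_lub_of_inv_setU n (a b c : {perm 'I_n}) :
  inv_set c = inv_set a :|: inv_set b -> weak_lub c a b.
Proof.
move=> cE; rewrite /weak_lub /weak_le cE subsetUl subsetUr.
by do 2!split=> //; move=> d ad bd; rewrite subUset ad bd.
Qed.

Section Obstruction.

Variables (n : nat) (I : {set interval_t n}) (s j e : 'I_n) (H0 : interval_t n).
Hypothesis I_wf : forall H, H \in I -> (H.1 <= H.2)%N.
Hypothesis H0I : H0 \in I.

Lemma not_Or_meet_morphism : lt_dir false s j -> lt_dir false j e ->
  (forall v, inH H0 v = ~~ outside false s e v) ->
  (forall H, H \in I -> inH H s -> inH H j -> ~~ inH H e ->
     exists2 v, inH H v & outside false s e v) ->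
  ~ Or_meet_morphism I.
Proof.
move=> sj je H0E s_j_without_e morph.
have [_ [_ [_ lower]]] := morph _ _ _ (weak_glb_of_inv_setI (inv_set_key_perm_meet sj je)).
have le : PI_le I (Or I (key_perm false s j e [:: 1; 0; 2]))
                  (Or I (key_perm false s j e [:: 1; 2; 0])).
  rewrite -(Or_key_perm_102_201 sj je I_wf) (Or_key_perm_210_120 sj je I_wf) //.
  exact: (PI_le_adjacent_swap (adjacent_swap_j_e sj je) I_wf (je : (j < e)%N)).
have := PI_le_leq (lower _ (Or_acyclic I_wf _) (rt_refl _ _ _) le) H0I.
rewrite (Or_key_perm_102_H0 sj je I_wf H0I H0E) (Or_key_perm_012_H0 sj je I_wf H0I H0E).
by rewrite leqNgt (sj : (s < j)%N).
Qed.

Lemma not_Or_join_morphism : lt_dir true s j -> lt_dir true j e ->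
  (forall v, inH H0 v = ~~ outside true s e v) ->
  (forall H, H \in I -> inH H s -> inH H j -> ~~ inH H e ->
     exists2 v, inH H v & outside true s e v) ->
  ~ Or_join_morphism I.
Proof.
move=> sj je H0E s_j_without_e morph.
have [_ [_ [_ upper]]] := morph _ _ _ (weak_lub_of_inv_setU (inv_set_key_perm_join sj je)).
have le : PI_le I (Or I (key_perm true s j e [:: 1; 2; 0]))
                  (Or I (key_perm true s j e [:: 1; 0; 2])).
  rewrite -(Or_key_perm_102_201 sj je I_wf) (Or_key_perm_210_120 sj je I_wf) //.
  exact: (PI_le_adjacent_swap (adjacent_swap_e_j sj je) I_wf (je : (e < j)%N)).
have := PI_le_leq (upper _ (Or_acyclic I_wf _) (rt_refl _ _ _) le) H0I.
rewrite (Or_key_perm_102_H0 sj je I_wf H0I H0E) (Or_key_perm_012_H0 sj je I_wf H0I H0E).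
by rewrite leqNgt (sj : (j < s)%N).
Qed.

End Obstruction.

Lemma closed_initial_of_Or_meet_morphism n (I : {set interval_t n}) :
  interval_hypergraph I -> Or_meet_morphism I -> closed_initial I.
Proof.
move=> [I_wf _] morph i j k /andP[ij jk] ik; apply: contraT => notij.
case: (@arg_minnP _ k (fun k0 : 'I_n => (j <= k0)%N && ((i, k0) \in I)) val).
  by rewrite ik andbT ltnW.
move=> e /andP[je ie] e_min; exfalso.
apply: (@not_Or_meet_morphism _ I i j e (i, e) I_wf ie ij).
- rewrite /lt_dir /= ltn_neqAle je andbT; apply: contraNneq notij => jE.
  by rewrite (@ord_inj _ j e jE).
- by move=> v; rewrite /inH /outside /lt_dir /=; lia.
- move=> [a b] HI; rewrite /inH /outside /lt_dir /= => /andP[ai ib] /andP[aj jb] notHe.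
  have be : (b < e)%N by move: notHe; lia.
  have [ai'|] := ltnP a i; first by exists a; rewrite ?leqnn ?ai' ?(I_wf _ HI).
  move=> ia; have aE : a = i by apply: ord_inj; lia.
  by have := e_min b; rewrite jb -aE HI leqNgt be => /(_ isT).
- exact: morph.
Qed.

Lemma closed_final_of_Or_join_morphism n (I : {set interval_t n}) :
  interval_hypergraph I -> Or_join_morphism I -> closed_final I.
Proof.
move=> [I_wf _] morph i j k /andP[ij jk] ik; apply: contraT => notjk.
case: (@arg_maxnP _ i (fun i0 : 'I_n => (i0 <= j)%N && ((i0, k) \in I)) val).
  by rewrite ik andbT ltnW.
move=> e /andP[ej ek] e_max; exfalso.
apply: (@not_Or_join_morphism _ I k j e (e, k) I_wf ek jk).
- rewrite /lt_dir /= ltn_neqAle ej andbT; apply: contraNneq notjk => eE.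
  by rewrite -(@ord_inj _ e j eE).
- by move=> v; rewrite /inH /outside /lt_dir /=; lia.
- move=> [a b] HI; rewrite /inH /outside /lt_dir /= => /andP[ak kb] /andP[aj jb] notHe.
  have ea : (e < a)%N by move: notHe; lia.
  have [kb'|] := ltnP k b; first by exists b; rewrite ?leqnn ?kb' ?(I_wf _ HI) ?orbT.
  move=> bk; have bE : b = k by apply: ord_inj; lia.
  by have := e_max a; rewrite aj -bE HI => /(_ isT) /=; rewrite leqNgt ea.
- exact: morph.
Qed.

Theorem theoremD (n : nat) (I : {set interval_t n}) :
  (1 <= n)%N -> interval_hypergraph I ->
  (Or_meet_morphism I <-> closed_initial I) /\
  (Or_join_morphism I <-> closed_final I).
Proof.
move=> _ hI; split; split.
- exact: closed_initial_of_Or_meet_morphism.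
- by move/(truncation_closed_initial hI); apply: Or_meet_morphism_of_truncation_closed hI.1.
- exact: closed_final_of_Or_join_morphism.
- by move/(truncation_closed_final hI); apply: Or_join_morphism_of_truncation_closed hI.1.
Qed.
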